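(* Let $l\ge-\tfrac12$. There exist constants $C_1,\dots,C_6$ depending only on $l$ such that for all $0<\eta<\xi$: $$V_1(z;\xi,\eta)\le C_1\frac{(z-\eta)^l\xi^l}{z^{2l}},\quad z\in\left(\tfrac{2\xi\eta}{\xi+\eta},\xi\right);$$ $$V_1(z;\xi,\eta)\le C_2\frac{(\xi-z)^l\eta^l}{z^{2l}}\left(\log\frac{(\xi-z)\eta}{(z-\eta)\xi}+C_3\right),\quad z\in\left(\eta,\tfrac{2\xi\eta}{\xi+\eta}\right);$$ $$V_2(z;\xi,\eta)\le C_4\frac{(\xi-\eta)^{1+2l}z}{\xi^{1+l}(\eta-z)^{1+l}},\quad z\in\left(0,\tfrac{\xi\eta}{2\xi-\eta}\right);$$ $$V_2(z;\xi,\eta)\le C_5\frac{(\xi-\eta)^l}{z^l}\left(\log\frac{z(\xi-\eta)}{\xi(\eta-z)}+C_6\right),\quad z\in\left(\tfrac{\xi\eta}{2\xi-\eta},\eta\right).$$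
   Context: Let ${}_2F_1$ denote the Gauss hypergeometric function (analytically continued to $(-\infty,0)$). For $0<\eta<z<\xi$ put $\sigma_1=\frac{(z-\xi)\eta}{(z-\eta)\xi}\in(-\infty,0)$ and $$V_1(z;\xi,\eta)=\frac{(z-\eta)^l\xi^l}{z^{2l}}\left|{}_2F_1(-l,-l;1;\sigma_1)\right|.$$ For $0<z<\eta<\xi$ put $\sigma_2=-\frac{z(\xi-\eta)}{\xi(\eta-z)}\in(-\infty,0)$ and $$V_2(z;\xi,\eta)=\frac{|\sin(\pi l)|\,\Gamma^2(1+l)}{\pi\,\Gamma(2+2l)}\frac{(\xi-\eta)^{1+2l}z}{\xi^{l+1}(\eta-z)^{l+1}}\left|{}_2F_1(1+l,1+l;2+2l;\sigma_2)\right|.$$ (These are the moduli $|v_1(z,0;\xi,\eta)|$, $|v_2(z,0;\xi,\eta)|$ of the two branches of the Riemann function of the relevant Goursat problem.) *)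

From Stdlib Require Import Reals Factorial ClassicalEpsilon.
Open Scope R_scope.

(* Limit of a real sequence (chosen via classical epsilon; meaningful when the
   sequence converges, i.e. when some l satisfies Un_cv u l). *)
Definition lim_seq (u : nat -> R) : R :=
  epsilon (inhabits 0) (fun l => Un_cv u l).

Fixpoint poch (a : R) (n : nat) : R :=
  match n with
  | O => 1
  | S k => poch a k * (a + INR k)
  end.

Definition hyp_series (a b c x : R) : R :=
  lim_seq (fun N => sum_f_R0
     (fun n => poch a n * poch b n / (poch c n * INR (fact n)) * x ^ n) N).

(* Gauss hypergeometric function 2F1(a,b;c;x) for x < 1: the series for
   |x| < 1, and for x <= -1 its analytic continuation, given by the Pfaff
   transformation 2F1(a,b;c;x) = (1-x)^(-a) 2F1(a,c-b;c;x/(x-1)),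
   where x/(x-1) lies in [1/2,1). *)
Definition hyp2F1 (a b c x : R) : R :=
  if Rle_dec x (-1)
  then Rpower (1 - x) (- a) * hyp_series a (c - b) c (x / (x - 1))
  else hyp_series a b c x.

(* Euler's Gamma function on (0, +oo), via the Gauss limit formula
   Gamma(x) = lim_n n! n^x / (x (x+1) ... (x+n)). *)
Definition Gamma (x : R) : R :=
  lim_seq (fun n => INR (fact n) * Rpower (INR n) x / poch x (S n)).

Definition sigma1 (z xi eta : R) : R := ((z - xi) * eta) / ((z - eta) * xi).

Definition V1 (l z xi eta : R) : R :=
  Rpower (z - eta) l * Rpower xi l / Rpower z (2 * l)
  * Rabs (hyp2F1 (- l) (- l) 1 (sigma1 z xi eta)).

Definition sigma2 (z xi eta : R) : R := - (z * (xi - eta)) / (xi * (eta - z)).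

Definition V2 (l z xi eta : R) : R :=
  Rabs (sin (PI * l)) * (Gamma (1 + l)) ^ 2 / (PI * Gamma (2 + 2 * l))
  * (Rpower (xi - eta) (1 + 2 * l) * z
     / (Rpower xi (l + 1) * Rpower (eta - z) (l + 1)))
  * Rabs (hyp2F1 (1 + l) (1 + l) (2 + 2 * l) (sigma2 z xi eta)).

(* On [(-1, 0)] the Taylor coefficients of 2F1(a, a; c; .) are nonnegative and, when
   [2a < c + 1], eventually nonincreasing, so the partial sums of the alternating series
   are uniformly bounded; this gives the bounds away from the logarithmic region.  Below
   [-1], at [-t], the Pfaff transformation yields [(1+t)^(-a)] times the zero-balanced
   series 2F1(a, c - a; c; w) at [w = t/(1+t)], whose coefficients are O(1/n), hence
   whose value is at most [1 + K (2 + log (1+t))].  Substituting [sigma1 = -t] and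
   [sigma2 = -t], where [t] is the ratio inside the logarithm of the claim, the power of
   [1+t] recombines with the prefactor up to a factor bounded by a constant. *)

From Stdlib Require Import Reals ClassicalEpsilon Lra Lia Psatz Arith.
From Coquelicot Require Import Coquelicot.
Open Scope R_scope.

Lemma Un_cv_power_series (a : nat -> R) (K x : R) :
  (forall n, Rabs (a n) <= K) -> Rabs x < 1 ->
  exists L, Un_cv (fun N => sum_f_R0 (fun n => a n * x ^ n) N) L.
Proof.
  intros Ha Hx.
  assert (E : ex_series (fun n => a n * x ^ n)).
  { apply (@ex_series_le R_AbsRing R_CompleteNormedModule _ (fun n => K * Rabs x ^ n)).
    - intros n. change norm with Rabs. simpl. rewrite Rabs_mult, <- RPow_abs.
      apply Rmult_le_compat_r; [apply pow_le, Rabs_pos | apply Ha].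
    - apply (@ex_series_scal_l R_AbsRing R_NormedModule K (fun n => Rabs x ^ n)).
      apply ex_series_geom. rewrite Rabs_Rabsolu; exact Hx. }
  destruct E as [L HL]. exists L. apply is_lim_seq_Reals.
  eapply is_lim_seq_ext; [intros; apply sum_n_Reals | exact HL].
Qed.

Lemma Rabs_lim_seq_le (u : nat -> R) (M : R) :
  (exists L, Un_cv u L) -> (forall N, Rabs (u N) <= M) -> Rabs (lim_seq u) <= M.
Proof.
  intros Hex HM. unfold lim_seq.
  pose proof (epsilon_spec (inhabits 0) (fun l => Un_cv u l) Hex) as HL.
  set (L := epsilon (inhabits 0) (fun l => Un_cv u l)) in *.
  destruct (Rle_lt_dec (Rabs L) M) as [h | h]; [exact h |].
  exfalso. destruct (HL (Rabs L - M)) as [N HN]; [lra |].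
  specialize (HN N (le_n N)). unfold Rdist in HN. rewrite Rabs_minus_sym in HN.
  pose proof (Rabs_triang_inv L (u N)). specialize (HM N). lra.
Qed.

Lemma Rdiv_le_cross (p b q d : R) : 0 < b -> 0 < d -> p * d <= q * b -> p / b <= q / d.
Proof.
  intros hb hd h. apply Rle_div_l; [exact hb |].
  replace (q / d * b) with ((q * b) / d) by (field; lra).
  apply Rle_div_r; [exact hd | exact h].
Qed.

Lemma pow_le_one (x : R) (n : nat) : 0 <= x <= 1 -> x ^ n <= 1.
Proof.
  intros hx. induction n as [| n IH]; simpl; [lra |].
  pose proof (pow_le x n ltac:(lra)). nra.
Qed.

Lemma sum_f_R0_ge_term (c : nat -> R) (n N : nat) :
  (forall k, 0 <= c k) -> (n <= N)%nat -> c n <= sum_f_R0 c N.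
Proof.
  intros Hc. induction N as [| N IH]; intros h.
  - replace n with 0%nat by lia. simpl; lra.
  - simpl. destruct (Nat.eq_dec n (S N)) as [-> | hn].
    + pose proof (cond_pos_sum c N Hc). lra.
    + specialize (IH ltac:(lia)). specialize (Hc (S N)). lra.
Qed.

Lemma sum_f_R0_le_mono (c : nat -> R) (N M : nat) :
  (forall k, 0 <= c k) -> (N <= M)%nat -> sum_f_R0 c N <= sum_f_R0 c M.
Proof.
  intros Hc h. induction h as [| M h IH]; [lra |]. simpl. specialize (Hc (S M)). lra.
Qed.

Lemma alternating_sum_bounds (d : nat -> R) (N : nat) :
  (forall n, 0 <= d n) -> (forall n, d (S n) <= d n) ->
  0 <= sum_f_R0 (fun i => (-1) ^ i * d i) N <= d 0%nat.
Proof.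
  revert d. induction N as [| N IH]; intros d Hd Hdec.
  - simpl. specialize (Hd 0%nat). lra.
  - rewrite decomp_sum by lia. simpl Init.Nat.pred.
    assert (E : sum_f_R0 (fun i => (-1) ^ S i * d (S i)) N
              = -1 * sum_f_R0 (fun i => (-1) ^ i * d (S i)) N).
    { rewrite scal_sum. apply sum_eq. intros; simpl; ring. }
    rewrite E. destruct (IH (fun i => d (S i))) as [lo hi]; auto.
    specialize (Hdec 0%nat). simpl pow. lra.
Qed.

Section EventuallyNonincreasing.

Variables (c : nat -> R) (N0 : nat).
Hypothesis c_ge0 : forall n, 0 <= c n.
Hypothesis c_nonincr : forall n, (N0 <= n)%nat -> c (S n) <= c n.

Lemma eventually_nonincreasing_le_sum (n : nat) : c n <= sum_f_R0 c N0.
Proof.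
  destruct (le_lt_dec n N0) as [h | h]; [exact (sum_f_R0_ge_term c n N0 c_ge0 h) |].
  assert (Hdec : forall k, c (N0 + k)%nat <= c N0).
  { induction k as [| k IH]; [rewrite Nat.add_0_r; lra |].
    replace (N0 + S k)%nat with (S (N0 + k)) by lia.
    pose proof (c_nonincr (N0 + k) ltac:(lia)). lra. }
  replace n with (N0 + (n - N0))%nat by lia.
  pose proof (Hdec (n - N0)%nat). pose proof (sum_f_R0_ge_term c N0 N0 c_ge0 (le_n _)). lra.
Qed.

(* Beyond [N0] the series at [x <= 0] alternates with nonincreasing terms, so its
   tail is dominated by its first term [c (S N0) <= c N0]. *)
Lemma alternating_partial_sum_le (x : R) : -1 <= x <= 0 ->
  forall N, Rabs (sum_f_R0 (fun n => c n * x ^ n) N) <= 2 * sum_f_R0 c N0.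
Proof.
  intros Hx N.
  set (S0 := sum_f_R0 c N0).
  assert (Hax : 0 <= Rabs x <= 1) by (rewrite Rabs_left1 by lra; lra).
  assert (HS0 : 0 <= S0) by (apply cond_pos_sum; exact c_ge0).
  assert (Hhead : forall M, (M <= N0)%nat -> Rabs (sum_f_R0 (fun n => c n * x ^ n) M) <= S0).
  { intros M hM. eapply Rle_trans; [apply sum_f_R0_triangle |].
    eapply Rle_trans; [| apply (sum_f_R0_le_mono c M N0 c_ge0 hM)].
    apply sum_Rle. intros k _.
    rewrite Rabs_mult, (Rabs_pos_eq (c k)), <- RPow_abs by exact (c_ge0 k).
    pose proof (pow_le_one (Rabs x) k Hax). pose proof (c_ge0 k).
    pose proof (pow_le (Rabs x) k (Rabs_pos x)). nra. }
  destruct (le_lt_dec N N0) as [h | h]; [pose proof (Hhead N h); lra |].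
  rewrite (tech2 _ N0 N h).
  set (d := fun i => c (S N0 + i)%nat * (- x) ^ i).
  assert (Htail : sum_f_R0 (fun i => c (S N0 + i)%nat * x ^ (S N0 + i)) (N - S N0)
                = x ^ S N0 * sum_f_R0 (fun i => (-1) ^ i * d i) (N - S N0)).
  { rewrite scal_sum. apply sum_eq. intros i _. unfold d.
    rewrite pow_add. replace x with (-1 * - x) at 2 by ring. rewrite Rpow_mult_distr. ring. }
  rewrite Htail.
  destruct (alternating_sum_bounds d (N - S N0)) as [lo hi].
  - intros i. unfold d. apply Rmult_le_pos; [apply c_ge0 | apply pow_le; lra].
  - intros i. unfold d. replace (S N0 + S i)%nat with (S (S N0 + i)) by lia. simpl pow.
    pose proof (c_nonincr (S N0 + i) ltac:(lia)). pose proof (c_ge0 (S (S N0 + i))).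
    pose proof (pow_le (- x) i ltac:(lra)). apply Rmult_le_compat; nra.
  - assert (Hd0 : d 0%nat = c (S N0)) by (unfold d; simpl; rewrite Nat.add_0_r; ring).
    pose proof (c_nonincr N0 (le_n _)). pose proof (Hhead N0 (le_n _)).
    pose proof (eventually_nonincreasing_le_sum N0) as HcN0.
    eapply Rle_trans; [apply Rabs_triang |]. rewrite Rabs_mult, <- RPow_abs.
    pose proof (pow_le_one (Rabs x) (S N0) Hax). pose proof (pow_le (Rabs x) (S N0) (Rabs_pos x)).
    rewrite (Rabs_pos_eq (sum_f_R0 (fun i => _ * d i) _)) by lra. change (sum_f_R0 c N0) with S0 in HcN0. nra.
Qed.

End EventuallyNonincreasing.

Lemma ln_le_sub1 (x : R) : 0 < x -> ln x <= x - 1.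
Proof.
  intros hx. rewrite <- (ln_exp (x - 1)). apply ln_le; [exact hx |].
  pose proof (exp_ineq1_le (x - 1)). lra.
Qed.

Lemma harmonic_sum_le_ln (m : nat) : sum_f_R0 (fun n => 1 / INR (S n)) m <= 1 + ln (INR (S m)).
Proof.
  induction m as [| m IH].
  - simpl. rewrite ln_1. lra.
  - rewrite tech5. rewrite !S_INR in *. pose proof (pos_INR m).
    pose proof (ln_le_sub1 ((INR m + 1) / (INR m + 1 + 1)) ltac:(apply Rdiv_lt_0_compat; lra)) as Hln.
    rewrite ln_div in Hln by lra.
    replace ((INR m + 1) / (INR m + 1 + 1) - 1) with (- (1 / (INR m + 1 + 1))) in Hln by (field; lra).
    lra.
Qed.

(* Split at [m = floor (1/(1-w)) - 1]: the first [m+1] terms are at most the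
   harmonic sum, and the rest at most [w^(m+1)/((m+2)(1-w)) <= 1]. *)
Lemma log_series_partial_sum_le (w : R) : 0 <= w < 1 ->
  forall N, sum_f_R0 (fun n => w ^ S n / INR (S n)) N <= 2 + ln (1 / (1 - w)).
Proof.
  intros Hw N. set (y := 1 / (1 - w)).
  assert (Hy : 1 <= y) by (unfold y; apply Rle_div_r; lra).
  destruct (nfloor_ex (y - 1) ltac:(lra)) as [m Hm].
  assert (Hterm : forall n, w ^ S n / INR (S n) <= 1 / INR (S n)).
  { intros n. unfold Rdiv. apply Rmult_le_compat_r.
    - left; apply Rinv_0_lt_compat, lt_0_INR; lia.
    - apply pow_le_one; lra. }
  assert (Hhead : forall M, (M <= m)%nat -> sum_f_R0 (fun n => w ^ S n / INR (S n)) M <= 1 + ln y).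
  { intros M hM. eapply Rle_trans; [apply sum_Rle; intros n _; apply Hterm |].
    eapply Rle_trans; [apply harmonic_sum_le_ln |]. apply Rplus_le_compat_l, ln_le.
    - apply lt_0_INR; lia.
    - rewrite S_INR. apply le_INR in hM. lra. }
  destruct (le_lt_dec N m) as [h | h]; [pose proof (Hhead N h); lra |].
  rewrite (tech2 _ m N h). pose proof (Hhead m (le_n _)).
  enough (sum_f_R0 (fun i => w ^ S (S m + i) / INR (S (S m + i))) (N - S m) <= 1) by lra.
  pose proof (pos_INR m).
  eapply Rle_trans.
  { apply sum_Rle. intros i _.
    instantiate (1 := fun i => w ^ i * / (INR m + 2)). unfold Rdiv.
    apply Rmult_le_compat.
    - apply pow_le; lra.
    - left; apply Rinv_0_lt_compat, lt_0_INR; lia.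
    - replace (S (S m + i)) with (i + S (S m))%nat by lia. rewrite pow_add.
      pose proof (pow_le_one w (S (S m)) ltac:(lra)). pose proof (pow_le w i ltac:(lra)).
      pose proof (pow_le w (S (S m)) ltac:(lra)). nra.
    - apply Rinv_le_contravar; [lra |].
      replace (INR m + 2) with (INR (S (S m))) by (rewrite !S_INR; ring). apply le_INR; lia. }
  rewrite <- scal_sum, tech3 by lra.
  pose proof (pow_le w (S (N - S m)) ltac:(lra)).
  assert ((1 - w ^ S (N - S m)) / (1 - w) <= y).
  { unfold y, Rdiv. apply Rmult_le_compat_r; [left; apply Rinv_0_lt_compat |]; lra. }
  apply (Rle_trans _ (/ (INR m + 2) * (INR m + 2))).
  - apply Rmult_le_compat_l; [left; apply Rinv_0_lt_compat |]; lra.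
  - right; field; lra.
Qed.

(* The ratio bounds telescope: the factors [k/(k+1)] multiply to [1/(n+1)], and the
   factors [1 + B/(k(k+1))] to at most [exp (B * sum 1/(k(k+1))) <= exp B]. *)
Lemma coef_le_inv_of_ratio_le (c : nat -> R) (A B : R) :
  0 <= A -> 0 <= B -> Rabs (c 1%nat) <= A ->
  (forall k, (1 <= k)%nat ->
     Rabs (c (S k)) <= Rabs (c k) * (INR k / (INR k + 1) * (1 + B / (INR k * (INR k + 1))))) ->
  forall n, Rabs (c (S n)) <= A * exp B / (INR n + 1).
Proof.
  intros HA HB H1 Hratio.
  assert (Hstep : forall n, Rabs (c (S n)) <= A * exp (B * (1 - 1 / (INR n + 1))) / (INR n + 1)).
  { induction n as [| n IH].
    - simpl. replace (B * (1 - 1 / (0 + 1))) with 0 by field. rewrite exp_0. lra.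
    - pose proof (Hratio (S n) ltac:(lia)) as Hr. rewrite S_INR in *. pose proof (pos_INR n).
      set (k := INR n) in *.
      set (e := B / ((k + 1) * (k + 1 + 1))) in *.
      assert (He : 0 <= e) by (apply Rdiv_le_0_compat; nra).
      assert (Hexp : exp (B * (1 - 1 / (k + 1 + 1))) = exp (B * (1 - 1 / (k + 1))) * exp e).
      { rewrite <- exp_plus. f_equal. unfold e. field. lra. }
      rewrite Hexp.
      pose proof (exp_ineq1_le e). pose proof (exp_pos (B * (1 - 1 / (k + 1)))).
      eapply Rle_trans; [apply Hr |].
      eapply Rle_trans.
      { apply Rmult_le_compat_r; [| apply IH]. apply Rmult_le_pos; [apply Rdiv_le_0_compat |]; lra. }
            replace (A * exp (B * (1 - 1 / (k + 1))) / (k + 1) * ((k + 1) / (k + 1 + 1) * (1 + e)))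
        with (A * exp (B * (1 - 1 / (k + 1))) / (k + 1 + 1) * (1 + e)) by (field; lra).
      replace (A * (exp (B * (1 - 1 / (k + 1))) * exp e) / (k + 1 + 1))
        with (A * exp (B * (1 - 1 / (k + 1))) / (k + 1 + 1) * exp e) by (field; lra).
      apply Rmult_le_compat_l; [| lra].
      apply Rdiv_le_0_compat; [apply Rmult_le_pos |]; lra. }
  intros n. eapply Rle_trans; [apply Hstep |]. pose proof (pos_INR n).
  unfold Rdiv. apply Rmult_le_compat_r; [left; apply Rinv_0_lt_compat; lra |].
  apply Rmult_le_compat_l; [exact HA |].
  destruct (Req_dec B 0) as [-> | hB0]; [right; f_equal; ring |].
  left. apply exp_increasing.
  assert (0 < 1 * / (INR n + 1)) by (rewrite Rmult_1_l; apply Rinv_0_lt_compat; lra). nra.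
Qed.

Lemma partial_sum_le_log (c : nat -> R) (K : R) :
  0 <= K -> Rabs (c 0%nat) <= 1 -> (forall n, Rabs (c (S n)) <= K / (INR n + 1)) ->
  forall w, 0 <= w < 1 ->
  forall N, Rabs (sum_f_R0 (fun n => c n * w ^ n) N) <= 1 + K * (2 + ln (1 / (1 - w))).
Proof.
  intros HK H0 Hc w Hw N.
  assert (Hln : 0 <= ln (1 / (1 - w))).
  { rewrite <- ln_1. apply ln_le; [lra |]. apply Rle_div_r; lra. }
  destruct N as [| N].
  - simpl. rewrite Rmult_1_r. nra.
  - rewrite decomp_sum by lia. simpl Init.Nat.pred. simpl pow at 1. rewrite Rmult_1_r.
    eapply Rle_trans; [apply Rabs_triang |]. apply Rplus_le_compat; [exact H0 |].
    eapply Rle_trans; [apply sum_f_R0_triangle |].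
    eapply Rle_trans.
    { apply sum_Rle. intros n _. instantiate (1 := fun n => w ^ S n / INR (S n) * K).
      cbv beta. rewrite Rabs_mult, (Rabs_pos_eq (w ^ S n)) by (apply pow_le; lra).
      pose proof (Hc n). pose proof (pow_le w (S n) ltac:(lra)).
      rewrite S_INR. replace (w ^ S n / (INR n + 1) * K) with (K / (INR n + 1) * w ^ S n)
        by (field; pose proof (pos_INR n); lra).
      apply Rmult_le_compat_r; assumption. }
    rewrite <- scal_sum. apply Rmult_le_compat_l; [exact HK |].
    pose proof (log_series_partial_sum_le w Hw N). lra.
Qed.

Definition hyp_coef (a b c : R) (n : nat) : R :=
  poch a n * poch b n / (poch c n * INR (fact n)).

Lemma poch_pos (c : R) (n : nat) : 0 < c -> 0 < poch c n.
Proof. intros h. induction n as [| n IH]; simpl; [lra |]. pose proof (pos_INR n). nra. Qed.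

Lemma hyp_coef_0 (a b c : R) : hyp_coef a b c 0 = 1.
Proof. unfold hyp_coef; simpl; field. Qed.

Lemma hyp_coef_S (a b c : R) (n : nat) : 0 < c ->
  hyp_coef a b c (S n)
  = hyp_coef a b c n * ((a + INR n) * (b + INR n) / ((c + INR n) * (INR n + 1))).
Proof.
  intros h. unfold hyp_coef. simpl poch. rewrite fact_simpl, mult_INR, S_INR.
  pose proof (poch_pos c n h). pose proof (INR_fact_neq_0 n). pose proof (pos_INR n).
  field. repeat split; lra.
Qed.

Lemma Rabs_hyp_series_le (a b c x K M : R) :
  (forall n, Rabs (hyp_coef a b c n) <= K) -> Rabs x < 1 ->
  (forall N, Rabs (sum_f_R0 (fun n => hyp_coef a b c n * x ^ n) N) <= M) ->
  Rabs (hyp_series a b c x) <= M.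
Proof.
  intros Hc Hx HM. apply Rabs_lim_seq_le; [exact (Un_cv_power_series _ K x Hc Hx) | exact HM].
Qed.

Lemma exists_INR_ge (y : R) : exists N : nat, y <= INR N.
Proof.
  destruct (nfloor_ex (Rabs y) (Rabs_pos y)) as [m Hm]. exists (S m). rewrite S_INR.
  pose proof (Rle_abs y). lra.
Qed.

Lemma hyp_coef_diag_ge0 (a c : R) (n : nat) : 0 < c -> 0 <= hyp_coef a a c n.
Proof.
  intros hc. induction n as [| n IH]; [rewrite hyp_coef_0; lra |].
  rewrite hyp_coef_S by exact hc. pose proof (pos_INR n).
  apply Rmult_le_pos; [exact IH |]. apply Rdiv_le_0_compat; [apply Rle_0_sqr | nra].
Qed.

(* The coefficient ratio [(a+n)^2 / ((c+n)(n+1))] is at most [1] once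
   [(c + 1 - 2a) n >= a^2 - c]. *)
Lemma hyp2F1_diag_bounded (a c : R) : 0 < c -> 2 * a < c + 1 ->
  exists B, forall s, -1 < s < 0 -> Rabs (hyp2F1 a a c s) <= B.
Proof.
  intros hc ha.
  destruct (exists_INR_ge ((a * a - c) / (c + 1 - 2 * a))) as [N0 HN0].
  apply Rle_div_l in HN0; [| lra].
  assert (Hnonincr : forall n, (N0 <= n)%nat -> hyp_coef a a c (S n) <= hyp_coef a a c n).
  { intros n hn. apply le_INR in hn. rewrite hyp_coef_S by exact hc.
    pose proof (hyp_coef_diag_ge0 a c n hc). pose proof (pos_INR n).
    assert ((a + INR n) * (a + INR n) / ((c + INR n) * (INR n + 1)) <= 1).
    { apply Rle_div_l; [nra |]. nra. }
    nra. }
  exists (2 * sum_f_R0 (hyp_coef a a c) N0). intros s hs.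
  unfold hyp2F1. destruct (Rle_dec s (-1)) as [h | _]; [lra |].
  apply (Rabs_hyp_series_le _ _ _ _ (sum_f_R0 (hyp_coef a a c) N0)).
  - intros n. rewrite Rabs_pos_eq by exact (hyp_coef_diag_ge0 a c n hc).
    apply (eventually_nonincreasing_le_sum _ N0 (fun n => hyp_coef_diag_ge0 a c n hc) Hnonincr).
  - rewrite Rabs_left by lra. lra.
  - apply (alternating_partial_sum_le _ N0 (fun n => hyp_coef_diag_ge0 a c n hc) Hnonincr). lra.
Qed.

(* For [c = a + b] the ratio is [(n^2 + c n + ab) / ((c+n)(n+1))], which is
   [n/(n+1) * (1 + O(1/n^2))]; hence the coefficients are [O(1/n)]. *)
Lemma hyp_series_zero_balanced_le_log (a b c : R) : 0 < c -> a + b = c ->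
  exists K, 0 <= K /\
  forall w, 0 <= w < 1 -> Rabs (hyp_series a b c w) <= 1 + K * (2 + ln (1 / (1 - w))).
Proof.
  intros hc hab.
  set (p := Rabs (a * b)). set (B := p + p / c). set (A := p / c).
  assert (Hp : 0 <= p) by apply Rabs_pos.
  assert (HA : 0 <= A) by (apply Rdiv_le_0_compat; lra).
  assert (HpB : p <= B) by (unfold B; pose proof (Rdiv_le_0_compat p c Hp hc); lra).
  assert (HcB : c * B = c * p + p) by (unfold B; field; lra).
  assert (Hratio : forall k, (1 <= k)%nat ->
    Rabs (hyp_coef a b c (S k)) <= Rabs (hyp_coef a b c k)
      * (INR k / (INR k + 1) * (1 + B / (INR k * (INR k + 1))))).
  { intros k hk. rewrite hyp_coef_S, Rabs_mult by exact hc.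
    apply Rmult_le_compat_l; [apply Rabs_pos |].
    apply le_INR in hk. simpl INR in hk. set (x := INR k) in *.
    replace (x / (x + 1) * (1 + B / (x * (x + 1)))) with ((x * (x + 1) + B) / ((x + 1) * (x + 1)))
      by (field; lra).
    replace ((a + x) * (b + x)) with (x * x + c * x + a * b) by (rewrite <- hab; ring).
    unfold Rdiv. rewrite Rabs_mult, Rabs_inv, (Rabs_pos_eq ((c + x) * (x + 1))) by nra.
    apply Rdiv_le_cross; [nra | nra |].
    pose proof (Rle_abs (a * b)) as Hp1. pose proof (Rle_abs (- (a * b))) as Hp2.
    rewrite Rabs_Ropp in Hp2. fold p in Hp1, Hp2.
    assert (Hcore : Rabs (x * x + c * x + a * b) * (x + 1) <= (x * (x + 1) + B) * (c + x)).
    { destruct (Rle_lt_dec 0 (x * x + c * x + a * b)) as [hq | hq];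
        [rewrite Rabs_pos_eq by exact hq | rewrite Rabs_left by exact hq]; nra. }
    pose proof (Rabs_pos (x * x + c * x + a * b)). nra. }
  assert (H1 : Rabs (hyp_coef a b c 1) <= A).
  { rewrite hyp_coef_S, hyp_coef_0 by exact hc. simpl INR.
    replace (1 * ((a + 0) * (b + 0) / ((c + 0) * (0 + 1)))) with (a * b / c) by (field; lra).
    unfold A, p. rewrite Rabs_div, (Rabs_pos_eq c) by lra. lra. }
  pose proof (coef_le_inv_of_ratio_le _ A B HA ltac:(lra) H1 Hratio) as Hdecay.
  set (K := A * exp B) in *.
  assert (HK : 0 <= K) by (unfold K; pose proof (exp_pos B); nra).
  exists K. split; [exact HK |]. intros w Hw.
  assert (H0 : Rabs (hyp_coef a b c 0) <= 1) by (rewrite hyp_coef_0, Rabs_R1; lra).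
  apply (Rabs_hyp_series_le _ _ _ _ (1 + K)).
  - intros [| n]; [lra |]. eapply Rle_trans; [apply Hdecay |].
    pose proof (pos_INR n). apply Rle_div_l; [lra |]. nra.
  - rewrite Rabs_pos_eq; lra.
  - exact (partial_sum_le_log _ K HK H0 Hdecay w Hw).
Qed.

Lemma hyp2F1_diag_opp_le_log (a c : R) : 0 < c ->
  exists K, 0 <= K /\ forall t, 1 < t ->
  Rabs (hyp2F1 a a c (- t)) <= Rpower (1 + t) (- a) * (1 + K * (2 + ln (1 + t))).
Proof.
  intros hc. destruct (hyp_series_zero_balanced_le_log a (c - a) c hc ltac:(ring)) as [K [HK HF]].
  exists K. split; [exact HK |]. intros t ht.
  unfold hyp2F1. destruct (Rle_dec (- t) (-1)) as [_ | h]; [| lra].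
  replace (1 - - t) with (1 + t) by ring.
  replace (- t / (- t - 1)) with (t / (1 + t)) by (field; lra).
  rewrite Rabs_mult, (Rabs_pos_eq (Rpower _ _)) by (left; apply exp_pos).
  apply Rmult_le_compat_l; [left; apply exp_pos |].
  replace (1 + t) with (1 / (1 - t / (1 + t))) at 2 by (field; lra).
  apply HF. split; [apply Rdiv_le_0_compat | apply Rlt_div_l]; lra.
Qed.

Lemma Rpower_pos (x y : R) : 0 < Rpower x y.
Proof. apply exp_pos. Qed.

Ltac Rpos := repeat first [apply Rpower_pos | apply Rdiv_lt_0_compat | apply Rmult_lt_0_compat | apply Rinv_0_lt_compat]; lra.

Lemma Rle_of_ln_le (x y : R) : 0 < x -> 0 < y -> ln x <= ln y -> x <= y.
Proof.
  intros hx hy [h | h].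
  - left. apply ln_lt_inv; assumption.
  - right. apply ln_inv; assumption.
Qed.

Lemma Rmult_le_Rabs_compat (l u v : R) : 0 <= u <= v -> l * u <= Rabs l * v.
Proof.
  intros h. apply (Rle_trans _ (Rabs l * u)).
  - apply Rmult_le_compat_r; [lra | apply Rle_abs].
  - apply Rmult_le_compat_l; [apply Rabs_pos | lra].
Qed.

Lemma ln_one_plus_bounds (t : R) : 1 < t -> ln t <= ln (1 + t) <= ln t + ln 2.
Proof.
  intros ht. split; [apply ln_le; lra |].
  rewrite <- ln_mult by lra. apply ln_le; lra.
Qed.

Lemma log_factor_le (K t : R) : 0 <= K -> 1 < t ->
  1 + K * (2 + ln (1 + t)) <= (1 + K) * (ln t + (3 + ln 2)).
Proof.
  intros hK ht. pose proof (ln_one_plus_bounds t ht).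
  assert (0 <= ln t) by (rewrite <- ln_1; apply ln_le; lra).
  assert (0 <= ln 2) by (pose proof ln_lt_2; lra).
  nra.
Qed.

Lemma V1_le_right (l B xi eta z : R) :
  (forall s, -1 < s < 0 -> Rabs (hyp2F1 (- l) (- l) 1 s) <= B) ->
  0 < eta -> eta < xi -> 2 * xi * eta / (xi + eta) < z < xi ->
  V1 l z xi eta <= B * (Rpower (z - eta) l * Rpower xi l / Rpower z (2 * l)).
Proof.
  intros HB he hx [hz1 hz2]. apply Rlt_div_l in hz1; [| lra].
  assert (hze : eta < z) by nra.
  unfold V1. rewrite Rmult_comm. apply Rmult_le_compat_r; [left; Rpos |].
  apply HB. unfold sigma1. split.
  - apply Rlt_div_r; nra.
  - apply Rlt_div_l; nra.
Qed.

(* With [t] the ratio inside the logarithm, [sigma1 = -t] and the prefactor of [V1]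
   times [(1+t)^l] equals the target prefactor times [((1+t)/t)^l], and
   [(1+t)/t] lies in [(1, 2)]. *)
Lemma V1_le_left (l K xi eta z : R) : 0 <= K ->
  (forall t, 1 < t ->
     Rabs (hyp2F1 (- l) (- l) 1 (- t)) <= Rpower (1 + t) l * (1 + K * (2 + ln (1 + t)))) ->
  0 < eta -> eta < xi -> eta < z < 2 * xi * eta / (xi + eta) ->
  V1 l z xi eta
  <= Rpower 2 (Rabs l) * (1 + K) * (Rpower (xi - z) l * Rpower eta l / Rpower z (2 * l))
     * (ln ((xi - z) * eta / ((z - eta) * xi)) + (3 + ln 2)).
Proof.
  intros HK HF he hx [hz1 hz2]. apply Rlt_div_r in hz2; [| lra].
  assert (hzx : z < xi) by nra.
  set (t := (xi - z) * eta / ((z - eta) * xi)).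
  assert (ht : 1 < t) by (apply Rlt_div_r; nra).
  assert (Hsigma : sigma1 z xi eta = - t) by (unfold sigma1, t; field; lra).
  unfold V1. rewrite Hsigma.
  set (P := Rpower (z - eta) l * Rpower xi l / Rpower z (2 * l)).
  set (P' := Rpower (xi - z) l * Rpower eta l / Rpower z (2 * l)).
  set (G := 1 + K * (2 + ln (1 + t))).
  assert (Hpref : P * Rpower (1 + t) l <= Rpower 2 (Rabs l) * P').
  { apply Rle_of_ln_le; [Rpos | Rpos |].
    assert (Hlnt : ln t = ln (xi - z) + ln eta - ln (z - eta) - ln xi).
    { unfold t. rewrite ln_div, !ln_mult by Rpos. ring. }
    unfold P, P'. rewrite !ln_mult, !ln_div, !ln_mult, !ln_Rpower by Rpos.
    pose proof (ln_one_plus_bounds t ht).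
    pose proof (Rmult_le_Rabs_compat l (ln (1 + t) - ln t) (ln 2) ltac:(lra)).
    rewrite Hlnt in *. lra. }
  assert (HG : 0 <= G).
  { unfold G. assert (0 <= ln (1 + t)) by (rewrite <- ln_1; apply ln_le; lra). nra. }
  apply (Rle_trans _ (P * Rpower (1 + t) l * G)).
  { rewrite Rmult_assoc. apply Rmult_le_compat_l; [left; unfold P; Rpos | apply HF, ht]. }
  replace (Rpower 2 (Rabs l) * (1 + K) * P' * (ln t + (3 + ln 2)))
    with (Rpower 2 (Rabs l) * P' * ((1 + K) * (ln t + (3 + ln 2)))) by ring.
  apply Rmult_le_compat; [left; unfold P; Rpos | exact HG | exact Hpref |].
  apply log_factor_le; assumption.
Qed.

(* Only its absolute value is used, so no sign information on [Gamma] is needed. *)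
Definition V2_const (l : R) : R :=
  Rabs (sin (PI * l)) * (Gamma (1 + l)) ^ 2 / (PI * Gamma (2 + 2 * l)).

Lemma V2_le_left (l B xi eta z : R) :
  (forall s, -1 < s < 0 -> Rabs (hyp2F1 (1 + l) (1 + l) (2 + 2 * l) s) <= B) ->
  0 < eta -> eta < xi -> 0 < z < xi * eta / (2 * xi - eta) ->
  V2 l z xi eta
  <= Rabs (V2_const l) * B
     * (Rpower (xi - eta) (1 + 2 * l) * z / (Rpower xi (1 + l) * Rpower (eta - z) (1 + l))).
Proof.
  intros HB he hx [hz1 hz2]. apply Rlt_div_r in hz2; [| lra].
  assert (hze : z < eta) by nra.
  change (V2 l z xi eta) with
    (V2_const l * (Rpower (xi - eta) (1 + 2 * l) * z / (Rpower xi (l + 1) * Rpower (eta - z) (l + 1)))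
     * Rabs (hyp2F1 (1 + l) (1 + l) (2 + 2 * l) (sigma2 z xi eta))).
  replace (l + 1) with (1 + l) by ring.
  set (Q := Rpower (xi - eta) (1 + 2 * l) * z / (Rpower xi (1 + l) * Rpower (eta - z) (1 + l))).
  assert (HQ : 0 <= Q) by (left; unfold Q; Rpos).
  assert (HF : Rabs (hyp2F1 (1 + l) (1 + l) (2 + 2 * l) (sigma2 z xi eta)) <= B).
  { apply HB. unfold sigma2. split; [apply Rlt_div_r | apply Rlt_div_l]; nra. }
  pose proof (Rabs_pos (hyp2F1 (1 + l) (1 + l) (2 + 2 * l) (sigma2 z xi eta))).
  pose proof (Rle_abs (V2_const l)). pose proof (Rabs_pos (V2_const l)).
  rewrite Rmult_assoc.
  apply (Rle_trans _ (Rabs (V2_const l) * (Q * B))); [| right; ring].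
  apply (Rle_trans _ (Rabs (V2_const l) * (Q * Rabs (hyp2F1 (1 + l) (1 + l) (2 + 2 * l) (sigma2 z xi eta))))).
  - apply Rmult_le_compat_r; [apply Rmult_le_pos |]; assumption.
  - apply Rmult_le_compat_l; [| apply Rmult_le_compat_l]; assumption.
Qed.

(* Here [sigma2 = -t] and the prefactor of [V2] is the target prefactor times
   [t^(1+l)], so the factor [(1+t)^(-(1+l))] leaves [(t/(1+t))^(1+l) <= 1]. *)
Lemma V2_le_right (l K xi eta z : R) : -1 <= l -> 0 <= K ->
  (forall t, 1 < t ->
     Rabs (hyp2F1 (1 + l) (1 + l) (2 + 2 * l) (- t))
     <= Rpower (1 + t) (- (1 + l)) * (1 + K * (2 + ln (1 + t)))) ->
  0 < eta -> eta < xi -> xi * eta / (2 * xi - eta) < z < eta ->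
  V2 l z xi eta
  <= Rabs (V2_const l) * (1 + K) * (Rpower (xi - eta) l / Rpower z l)
     * (ln (z * (xi - eta) / (xi * (eta - z))) + (3 + ln 2)).
Proof.
  intros hl HK HF he hx [hz1 hz2]. apply Rlt_div_l in hz1; [| lra].
  assert (hz0 : 0 < z) by nra.
  set (t := z * (xi - eta) / (xi * (eta - z))).
  assert (ht : 1 < t) by (apply Rlt_div_r; nra).
  assert (Hsigma : sigma2 z xi eta = - t) by (unfold sigma2, t; field; lra).
  change (V2 l z xi eta) with
    (V2_const l * (Rpower (xi - eta) (1 + 2 * l) * z / (Rpower xi (l + 1) * Rpower (eta - z) (l + 1)))
     * Rabs (hyp2F1 (1 + l) (1 + l) (2 + 2 * l) (sigma2 z xi eta))).
  rewrite Hsigma.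
  set (Q := Rpower (xi - eta) (1 + 2 * l) * z / (Rpower xi (l + 1) * Rpower (eta - z) (l + 1))).
  set (Y := Rpower (xi - eta) l / Rpower z l).
  set (F := Rabs (hyp2F1 (1 + l) (1 + l) (2 + 2 * l) (- t))).
  set (G := 1 + K * (2 + ln (1 + t))).
  assert (Hpref : Q * Rpower (1 + t) (- (1 + l)) <= Y).
  { apply Rle_of_ln_le; [unfold Q; Rpos | unfold Y; Rpos |].
    assert (Hlnt : ln t = ln z + ln (xi - eta) - ln xi - ln (eta - z)).
    { unfold t. rewrite ln_div, !ln_mult by Rpos. ring. }
    unfold Q, Y. rewrite !ln_mult, !ln_div, !ln_mult, !ln_Rpower by Rpos.
    pose proof (ln_one_plus_bounds t ht).
    assert (0 <= (1 + l) * (ln (1 + t) - ln t)) by (apply Rmult_le_pos; lra).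
    rewrite Hlnt in *. lra. }
  assert (HG : 0 <= G).
  { unfold G. assert (0 <= ln (1 + t)) by (rewrite <- ln_1; apply ln_le; lra). nra. }
  assert (HQ : 0 <= Q) by (left; unfold Q; Rpos).
  assert (HY : 0 <= Y) by (left; unfold Y; Rpos).
  assert (HF0 : 0 <= F) by apply Rabs_pos.
  pose proof (Rle_abs (V2_const l)). pose proof (Rabs_pos (V2_const l)).
  rewrite Rmult_assoc.
  apply (Rle_trans _ (Rabs (V2_const l) * (Q * F))); [apply Rmult_le_compat_r; nra |].
  replace (Rabs (V2_const l) * (1 + K) * Y * (ln t + (3 + ln 2)))
    with (Rabs (V2_const l) * (Y * ((1 + K) * (ln t + (3 + ln 2))))) by ring.
  apply Rmult_le_compat_l; [assumption |].
  apply (Rle_trans _ (Q * Rpower (1 + t) (- (1 + l)) * G)).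
  { rewrite Rmult_assoc. apply Rmult_le_compat_l; [exact HQ | apply HF, ht]. }
  apply Rmult_le_compat; [left; unfold Q; Rpos | exact HG | exact Hpref |].
  apply log_factor_le; assumption.
Qed.

Theorem lemmaA1 (l : R) (hl : -1/2 <= l) :
  exists C1 C2 C3 C4 C5 C6 : R,
  forall xi eta : R, 0 < eta -> eta < xi ->
    (forall z, 2 * xi * eta / (xi + eta) < z < xi ->
       V1 l z xi eta <= C1 * (Rpower (z - eta) l * Rpower xi l / Rpower z (2 * l))) /\
    (forall z, eta < z < 2 * xi * eta / (xi + eta) ->
       V1 l z xi eta <= C2 * (Rpower (xi - z) l * Rpower eta l / Rpower z (2 * l))
                        * (ln ((xi - z) * eta / ((z - eta) * xi)) + C3)) /\
    (forall z, 0 < z < xi * eta / (2 * xi - eta) ->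
       V2 l z xi eta <= C4 * (Rpower (xi - eta) (1 + 2 * l) * z
                              / (Rpower xi (1 + l) * Rpower (eta - z) (1 + l)))) /\
    (forall z, xi * eta / (2 * xi - eta) < z < eta ->
       V2 l z xi eta <= C5 * (Rpower (xi - eta) l / Rpower z l)
                        * (ln (z * (xi - eta) / (xi * (eta - z))) + C6)).
Proof.
  destruct (hyp2F1_diag_bounded (- l) 1 ltac:(lra) ltac:(lra)) as [B1 H1].
  destruct (hyp2F1_diag_opp_le_log (- l) 1 ltac:(lra)) as [K2 [HK2 H2]].
  setoid_rewrite Ropp_involutive in H2.
  destruct (hyp2F1_diag_bounded (1 + l) (2 + 2 * l) ltac:(lra) ltac:(lra)) as [B3 H3].
  destruct (hyp2F1_diag_opp_le_log (1 + l) (2 + 2 * l) ltac:(lra)) as [K4 [HK4 H4]].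
  exists B1, (Rpower 2 (Rabs l) * (1 + K2)), (3 + ln 2),
    (Rabs (V2_const l) * B3), (Rabs (V2_const l) * (1 + K4)), (3 + ln 2).
  intros xi eta he hx. repeat split; intros z hz.
  - exact (V1_le_right l B1 xi eta z H1 he hx hz).
  - exact (V1_le_left l K2 xi eta z HK2 H2 he hx hz).
  - exact (V2_le_left l B3 xi eta z H3 he hx hz).
  - exact (V2_le_right l K4 xi eta z ltac:(lra) HK4 H4 he hx hz).
Qed.
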